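(* For every (closed) term $P$, $$[\![P]\!] = \{ s \in \Sigma^* \mid \exists M.\ P \overset{s}{\Rightarrow} M \text{ and } M \text{ is not doomed} \}.$$
   Context: Fix a set $\Sigma$ of events. Terms: $P, Q ::= \mathit{STOP} \mid \mathit{FAIL} \mid ?x{:}E \rightarrow P \mid P \,\Box\, Q \mid P \parallel_E Q$, where an event set $E$ is $f(y_1,\dots,y_n)$ with $f : \Sigma^n \to 2^\Sigma$ computable and each $y_i$ an event variable or event; $x$ is bound in $P$ in $?x{:}E\rightarrow P$. Terms are closed, so each $E$ denotes a subset of $\Sigma$; $[e/x]P$ is substitution of event $e$ for $x$. Trace semantics. A trace set is a prefix-closed subset of $\Sigma^*$ (possibly empty); $\varepsilon$ is the empty trace. For a trace set $T$: $eT := \{\varepsilon\} \cup \{et \mid t \in T\}$, $T(e) := \{t \mid et \in T\}$. For $E \subseteq \Sigma$, $\parallel_E$ on trace sets is the unique function with $\varnothing \parallel_E T = T \parallel_E \varnothing = \varnothing$ and, for nonempty $T_1, T_2$, $T_1 \parallel_E T_2 = \bigcup_{e \in E} e(T_1(e) \parallel_E T_2(e)) \cup \bigcup_{e \in \Sigma\setminus E}( e(T_1(e) \parallel_E T_2) \cup e(T_1 \parallel_E T_2(e)))$. The semantics: $[\![\mathit{STOP}]\!] = \{\varepsilon\}$, $[\![\mathit{FAIL}]\!] = \varnothing$, $[\![?x{:}E \rightarrow P]\!] = \{\varepsilon\} \cup \bigcup_{e \in E} e[\![ [e/x]P ]\!]$, $[\![P \Box Q]\!] = [\![P]\!] \cup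 [\![Q]\!]$, $[\![P \parallel_E Q]\!] = [\![P]\!] \parallel_E [\![Q]\!]$. Operational semantics. Actions $a ::= e \mid \tau$, $\tau \notin \Sigma$. Doomed terms: $D ::= \mathit{FAIL} \mid D \Box D \mid D \parallel_E P \mid P \parallel_E D$; viable terms $\hat P, \hat Q$ are non-doomed terms. The internal transition relation $\xrightarrow{a}$ is the least relation closed under: (1) $e \in E \Rightarrow (?x{:}E \rightarrow P) \xrightarrow{e} [e/x]P$; (2) $P \xrightarrow{\tau} P' \Rightarrow P \Box Q \xrightarrow{\tau} P' \Box Q$; (3) $Q \xrightarrow{\tau} Q' \Rightarrow P \Box Q \xrightarrow{\tau} P \Box Q'$; (4) $P \xrightarrow{e} P' \Rightarrow P \Box Q \xrightarrow{e} P'$; (5) $Q \xrightarrow{e} Q' \Rightarrow P \Box Q \xrightarrow{e} Q'$; (6) $P \xrightarrow{a} P'$, $a \notin E$, $\hat Q$ viable $\Rightarrow P \parallel_E \hat Q \xrightarrow{a} P' \parallel_E \hat Q$; (7) $Q \xrightarrow{a} Q'$, $a \notin E$, $\hat P$ viable $\Rightarrow \hat P \parallel_E Q \xrightarrow{a} \hat P \parallel_E Q'$; (8) $\hat P, \hat Q$ viable, $\hat P \xrightarrow{e} P'$, $\hat Q \xrightarrow{e} Q'$, $e \in E$ $\Rightarrow \hat P \parallel_E \hat Q \xrightarrow{e} P' \parallel_E Q'$; (9) $D_1, D_2$ doomed, $D_1 \xrightarrow{\tau} P_1 \Rightarrow D_1 \parallel_E D_2 \xrightarrow{\tau} P_1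 \parallel_E D_2$; (10) $D_1, D_2$ doomed, $D_2 \xrightarrow{\tau} P_2 \Rightarrow D_1 \parallel_E D_2 \xrightarrow{\tau} D_1 \parallel_E P_2$; (11) $\mathit{FAIL} \Box \mathit{FAIL} \xrightarrow{\tau} \mathit{FAIL}$; (12) $\mathit{FAIL} \parallel_E P \xrightarrow{\tau} \mathit{FAIL}$; (13) $P \parallel_E \mathit{FAIL} \xrightarrow{\tau} \mathit{FAIL}$. For $s \in \Sigma^*$, the visible transition $P \overset{s}{\Rightarrow} Q$ holds iff there is a finite sequence (possibly of length zero) of internal transitions $P = P_0 \xrightarrow{a_1} P_1 \cdots \xrightarrow{a_n} P_n = Q$ such that deleting all $\tau$'s from $a_1 \cdots a_n$ yields $s$. *)

From Stdlib Require Import List Arith.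
Import ListNotations.
Set Implicit Arguments.

Section Calculus.
Variable Sigma : Type.

Inductive arg : Type :=
| AVar : nat -> arg
| AEv : Sigma -> arg.

(* Event set expression E = f(y_1,...,y_n).  f : Sigma^n -> 2^Sigma is
   represented as a function on lists (applied to the list of the n argument
   values), with subsets of Sigma given by (computable) boolean membership. *)
Record evset : Type := EvSet { ev_fun : list Sigma -> Sigma -> bool;
                               ev_args : list arg }.

Inductive term : Type :=
| STOP : term
| FAIL : term
| Pre : nat -> evset -> term -> term   (* ?x:E -> P, x bound in P *)
| Ext : term -> term -> term
| Par : term -> evset -> term -> term.

Definition subst_arg (e : Sigma) (x : nat) (a : arg) : arg :=
  match a with AVar y => if Nat.eqb x y then AEv e else a | AEv _ => a end.

Definition subst_evset (e : Sigma) (x : nat) (E : evset) : evset :=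
  EvSet (ev_fun E) (map (subst_arg e x) (ev_args E)).

Fixpoint subst (e : Sigma) (x : nat) (P : term) : term :=
  match P with
  | STOP => STOP
  | FAIL => FAIL
  | Pre y E Q => Pre y (subst_evset e x E)
                     (if Nat.eqb x y then Q else subst e x Q)
  | Ext P1 P2 => Ext (subst e x P1) (subst e x P2)
  | Par P1 E P2 => Par (subst e x P1) (subst_evset e x E) (subst e x P2)
  end.

Definition arg_closed (bound : list nat) (a : arg) : Prop :=
  match a with AVar y => In y bound | AEv _ => True end.

Definition evset_closed (bound : list nat) (E : evset) : Prop :=
  Forall (arg_closed bound) (ev_args E).

Fixpoint closed_under (bound : list nat) (P : term) : Prop :=
  match P with
  | STOP | FAIL => True
  | Pre y E Q => evset_closed bound E /\ closed_under (y :: bound) Q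
  | Ext P1 P2 => closed_under bound P1 /\ closed_under bound P2
  | Par P1 E P2 => closed_under bound P1 /\ evset_closed bound E /\
                   closed_under bound P2
  end.

Definition closed (P : term) : Prop := closed_under [] P.

Definition arg_val (a : arg) : option Sigma :=
  match a with AVar _ => None | AEv e => Some e end.

Definition in_evset (E : evset) (e : Sigma) : Prop :=
  exists vs, map arg_val (ev_args E) = map Some vs /\ ev_fun E vs e = true.

Definition trace := list Sigma.
Definition traceset := trace -> Prop.

Definition nonempty (T : traceset) : Prop := exists t, T t.
Definition after (T : traceset) (e : Sigma) : traceset := fun t => T (e :: t).

(* T1 ||_E T2, by recursion on the trace, unfolding the defining equation:
   empty if either argument is empty; otherwise the union
   U_{e in E} e(T1(e) || T2(e)) U U_{e notin E} (e(T1(e) || T2) U e(T1 || T2(e))),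
   where eT = {eps} U {et | t in T}. *)
Fixpoint par_tr (E : evset) (T1 T2 : traceset) (t : trace) : Prop :=
  nonempty T1 /\ nonempty T2 /\
  match t with
  | [] => exists e : Sigma, True
  | e :: t' =>
      (in_evset E e /\ par_tr E (after T1 e) (after T2 e) t') \/
      (~ in_evset E e /\
         (par_tr E (after T1 e) T2 t' \/ par_tr E T1 (after T2 e) t'))
  end.

Fixpoint size (P : term) : nat :=
  match P with
  | STOP | FAIL => 1
  | Pre _ _ Q => S (size Q)
  | Ext P1 P2 => S (size P1 + size P2)
  | Par P1 _ P2 => S (size P1 + size P2)
  end.

(* Denotation with fuel (recursion on the size of terms; substitution
   preserves size). *)
Fixpoint den_fuel (n : nat) (P : term) : traceset :=
  match n with
  | O => fun _ => False
  | S n' =>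
    match P with
    | STOP => fun t => t = []
    | FAIL => fun _ => False
    | Pre x E Q => fun t =>
        match t with
        | [] => True
        | e :: t' => in_evset E e /\ den_fuel n' (subst e x Q) t'
        end
    | Ext P1 P2 => fun t => den_fuel n' P1 t \/ den_fuel n' P2 t
    | Par P1 E P2 => par_tr E (den_fuel n' P1) (den_fuel n' P2)
    end
  end.

Definition den (P : term) : traceset := den_fuel (size P) P.

(* actions: Some e = visible event e, None = tau *)
Definition action := option Sigma.

Definition in_act (E : evset) (a : action) : Prop :=
  match a with Some e => in_evset E e | None => False end.

Inductive doomed : term -> Prop :=
| D_FAIL : doomed FAIL
| D_Ext : forall D1 D2, doomed D1 -> doomed D2 -> doomed (Ext D1 D2)
| D_ParL : forall D E P, doomed D -> doomed (Par D E P)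
| D_ParR : forall P E D, doomed D -> doomed (Par P E D).

Definition viable (P : term) : Prop := ~ doomed P.

Inductive step : term -> action -> term -> Prop :=
| S1 : forall x E P e, in_evset E e -> step (Pre x E P) (Some e) (subst e x P)
| S2 : forall P P' Q, step P None P' -> step (Ext P Q) None (Ext P' Q)
| S3 : forall P Q Q', step Q None Q' -> step (Ext P Q) None (Ext P Q')
| S4 : forall P P' Q e, step P (Some e) P' -> step (Ext P Q) (Some e) P'
| S5 : forall P Q Q' e, step Q (Some e) Q' -> step (Ext P Q) (Some e) Q'
| S6 : forall P P' E Q a, step P a P' -> ~ in_act E a -> viable Q ->
         step (Par P E Q) a (Par P' E Q)
| S7 : forall P E Q Q' a, step Q a Q' -> ~ in_act E a -> viable P ->
         step (Par P E Q) a (Par P E Q')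
| S8 : forall P Q P' Q' E e, viable P -> viable Q ->
         step P (Some e) P' -> step Q (Some e) Q' -> in_evset E e ->
         step (Par P E Q) (Some e) (Par P' E Q')
| S9 : forall D1 D2 E P1, doomed D1 -> doomed D2 -> step D1 None P1 ->
         step (Par D1 E D2) None (Par P1 E D2)
| S10 : forall D1 D2 E P2, doomed D1 -> doomed D2 -> step D2 None P2 ->
         step (Par D1 E D2) None (Par D1 E P2)
| S11 : step (Ext FAIL FAIL) None FAIL
| S12 : forall E P, step (Par FAIL E P) None FAIL
| S13 : forall P E, step (Par P E FAIL) None FAIL.

Inductive wsteps : term -> trace -> term -> Prop :=
| W_refl : forall P, wsteps P [] P
| W_tau : forall P P' s Q, step P None P' -> wsteps P' s Q -> wsteps P s Q
| W_ev : forall P P' e s Q, step P (Some e) P' -> wsteps P' s Q ->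
           wsteps P (e :: s) Q.

End Calculus.

(** A doomed term has no traces and a viable one has ε,
    which settles the empty trace. A transition [P -a-> P'] only prepends the visible
    part of [a] to the traces of [P'] (the τ-rules 9–13 start from doomed terms), and
    conversely every trace [e :: t] of [P] is realised by a step [P -e-> P'] with [t]
    a trace of [P']. For parallel composition both directions use the description of
    [T1 ||_E T2] as the E-synchronised interleavings of traces of [T1] and [T2]. *)

From Stdlib Require Import List Lia.
Import ListNotations.

Section TraceSemantics.
Variable Sigma : Type.

Lemma size_subst (P : term Sigma) e x : size (subst e x P) = size P.
Proof.
  induction P; simpl; auto.
  destruct (Nat.eqb x n); simpl; auto.
Qed.

Lemma size_pos (P : term Sigma) : 1 <= size P.
Proof. destruct P; simpl; lia. Qed.

Lemma par_tr_mono (E : evset Sigma) : forall t (T1 T2 T1' T2' : traceset Sigma),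
  (forall u, T1 u -> T1' u) -> (forall u, T2 u -> T2' u) ->
  par_tr E T1 T2 t -> par_tr E T1' T2' t.
Proof.
  induction t as [|e t IH]; simpl;
    intros T1 T2 T1' T2' H1 H2 [[u Hu] [[v Hv] Ht]];
    (split; [exists u; auto | split; [exists v; auto |]]); auto.
  destruct Ht as [[Hin Ht] | [Hout [Ht | Ht]]].
  - left; split; [exact Hin | eapply IH; [| | exact Ht]; unfold after; auto].
  - right; split; [exact Hout | left; eapply IH; [| | exact Ht]; unfold after; auto].
  - right; split; [exact Hout | right; eapply IH; [| | exact Ht]; unfold after; auto].
Qed.

Lemma den_fuel_stable : forall n m (P : term Sigma) t,
  size P <= n -> size P <= m -> (den_fuel n P t <-> den_fuel m P t).
Proof.
  induction n as [|n IH]; intros m P t Hn Hm;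
    [pose proof (size_pos P); lia |].
  destruct m as [|m]; [pose proof (size_pos P); lia |].
  destruct P as [| |x E Q|P1 P2|P1 E P2]; simpl in *; try reflexivity.
  - destruct t as [|e t]; [reflexivity |].
    assert (HQ := IH m (subst e x Q) t).
    rewrite size_subst in HQ; specialize (HQ ltac:(lia) ltac:(lia)); tauto.
  - rewrite (IH m P1 t), (IH m P2 t) by lia; reflexivity.
  - assert (H1 : forall u, den_fuel n P1 u <-> den_fuel m P1 u) by (intro; apply IH; lia).
    assert (H2 : forall u, den_fuel n P2 u <-> den_fuel m P2 u) by (intro; apply IH; lia).
    split; apply par_tr_mono; firstorder.
Qed.

Lemma den_FAIL {t} : ~ den (FAIL Sigma) t.
Proof. intros []. Qed.

Lemma den_Pre_nil x E (Q : term Sigma) : den (Pre x E Q) [].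
Proof. exact I. Qed.

Lemma den_Pre_cons x E (Q : term Sigma) e t :
  den (Pre x E Q) (e :: t) <-> in_evset E e /\ den (subst e x Q) t.
Proof. unfold den; simpl; rewrite size_subst; reflexivity. Qed.

Lemma den_Ext (P1 P2 : term Sigma) t : den (Ext P1 P2) t <-> den P1 t \/ den P2 t.
Proof.
  unfold den; simpl.
  rewrite (den_fuel_stable (size P1 + size P2) (size P1) P1),
          (den_fuel_stable (size P1 + size P2) (size P2) P2) by lia.
  reflexivity.
Qed.

Lemma den_Par_par_tr (P1 P2 : term Sigma) E t :
  den (Par P1 E P2) t <-> par_tr E (den P1) (den P2) t.
Proof.
  unfold den; simpl.
  assert (H1 : forall u, den_fuel (size P1 + size P2) P1 u <-> den_fuel (size P1) P1 u)
    by (intro; apply den_fuel_stable; lia).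
  assert (H2 : forall u, den_fuel (size P1 + size P2) P2 u <-> den_fuel (size P2) P2 u)
    by (intro; apply den_fuel_stable; lia).
  split; apply par_tr_mono; firstorder.
Qed.

(* The components may run beyond what [t] consumes ([interleaves_nil]): in [par_tr]
   the empty trace only asks both trace sets to be nonempty. *)
Inductive interleaves (E : evset Sigma) : trace Sigma -> trace Sigma -> trace Sigma -> Prop :=
| interleaves_nil t1 t2 : interleaves E t1 t2 []
| interleaves_sync e t1 t2 t : in_evset E e -> interleaves E t1 t2 t ->
    interleaves E (e :: t1) (e :: t2) (e :: t)
| interleaves_left e t1 t2 t : ~ in_evset E e -> interleaves E t1 t2 t ->
    interleaves E (e :: t1) t2 (e :: t)
| interleaves_right e t1 t2 t : ~ in_evset E e -> interleaves E t1 t2 t ->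
    interleaves E t1 (e :: t2) (e :: t).

(* The [[]] clause of [par_tr] asks for some event [e : Sigma]. *)
Hypothesis Sigma_inhabited : inhabited Sigma.

Lemma par_tr_interleaves (E : evset Sigma) : forall t (T1 T2 : traceset Sigma),
  par_tr E T1 T2 t <-> exists t1 t2, T1 t1 /\ T2 t2 /\ interleaves E t1 t2 t.
Proof.
  intro t; split.
  - revert T1 T2; induction t as [|e t IH]; simpl; intros T1 T2 [[u Hu] [[v Hv] Ht]].
    + exists u, v; repeat split; auto; constructor.
    + destruct Ht as [[Hin Ht] | [Hout [Ht | Ht]]];
        destruct (IH _ _ Ht) as (t1 & t2 & H1 & H2 & Hi).
      * exists (e :: t1), (e :: t2); repeat split; auto; constructor; auto.
      * exists (e :: t1), t2; repeat split; auto; constructor; auto.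
      * exists t1, (e :: t2); repeat split; auto; constructor; auto.
  - intros (t1 & t2 & H1 & H2 & Hi); revert T1 T2 H1 H2.
    induction Hi as [t1 t2|e t1 t2 t Hin Hi IH|e t1 t2 t Hout Hi IH|e t1 t2 t Hout Hi IH];
      intros T1 T2 H1 H2; simpl;
      (split; [eexists; exact H1 | split; [eexists; exact H2 |]]).
    + destruct Sigma_inhabited as [e]; exists e; exact I.
    + left; split; [exact Hin | apply IH; auto].
    + right; split; [exact Hout | left; apply IH; auto].
    + right; split; [exact Hout | right; apply IH; auto].
Qed.

Lemma den_Par (P1 P2 : term Sigma) E t :
  den (Par P1 E P2) t <->
  exists t1 t2, den P1 t1 /\ den P2 t2 /\ interleaves E t1 t2 t.
Proof. rewrite den_Par_par_tr; apply par_tr_interleaves. Qed.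

Lemma doomed_den {P : term Sigma} {t} : doomed P -> ~ den P t.
Proof.
  intros HD; revert t.
  induction HD as [|D1 D2 _ IH1 _ IH2|D E Q _ IH|Q E D _ IH]; intros t Ht.
  - exact (den_FAIL Ht).
  - apply den_Ext in Ht as [Ht | Ht]; [exact (IH1 _ Ht) | exact (IH2 _ Ht)].
  - apply den_Par in Ht as (t1 & _ & Ht1 & _); exact (IH _ Ht1).
  - apply den_Par in Ht as (_ & t2 & _ & Ht2 & _); exact (IH _ Ht2).
Qed.

Lemma den_nil_or_doomed (P : term Sigma) : den P [] \/ doomed P.
Proof.
  induction P as [| |x E Q _|P1 [H1|H1] P2 [H2|H2]|P1 [H1|H1] E P2 [H2|H2]];
    try solve [left; apply den_Ext; auto | right; constructor; auto].
  - left; reflexivity.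
  - left; apply den_Pre_nil.
  - left; apply den_Par; exists [], []; repeat split; auto; constructor.
Qed.

Definition cons_act (a : action Sigma) (t : trace Sigma) : trace Sigma :=
  match a with Some e => e :: t | None => t end.

Lemma step_den {P : term Sigma} {a P'} :
  step P a P' -> forall t, den P' t -> den P (cons_act a t).
Proof.
  induction 1 as [x E Q e Hin|P P' Q _ IH|P Q Q' _ IH|P P' Q e _ IH|P Q Q' e _ IH
                 |P P' E Q a _ IH Hout _|P E Q Q' a _ IH Hout _
                 |P Q P' Q' E e _ _ _ IH1 _ IH2 Hin|D1 D2 E P1 _ HD2 _ _
                 |D1 D2 E P2 HD1 _ _ _| |E P|P E]; intros t Ht; simpl in *.
  - apply den_Pre_cons; auto.
  - apply den_Ext in Ht as [Ht | Ht]; apply den_Ext; auto.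
  - apply den_Ext in Ht as [Ht | Ht]; apply den_Ext; auto.
  - apply den_Ext; auto.
  - apply den_Ext; auto.
  - apply den_Par in Ht as (t1 & t2 & Ht1 & Ht2 & Hi); apply den_Par.
    exists (cons_act a t1), t2; repeat split; auto.
    destruct a; simpl in *; [constructor|]; auto.
  - apply den_Par in Ht as (t1 & t2 & Ht1 & Ht2 & Hi); apply den_Par.
    exists t1, (cons_act a t2); repeat split; auto.
    destruct a; simpl in *; [constructor|]; auto.
  - apply den_Par in Ht as (t1 & t2 & Ht1 & Ht2 & Hi); apply den_Par.
    exists (e :: t1), (e :: t2); repeat split; auto; constructor; auto.
  - apply den_Par in Ht as (_ & t2 & _ & Ht2 & _); destruct (doomed_den HD2 Ht2).
  - apply den_Par in Ht as (t1 & _ & Ht1 & _); destruct (doomed_den HD1 Ht1).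
  - destruct (den_FAIL Ht).
  - destruct (den_FAIL Ht).
  - destruct (den_FAIL Ht).
Qed.

Lemma wsteps_den {P M : term Sigma} {s} : wsteps P s M -> ~ doomed M -> den P s.
Proof.
  induction 1 as [P|P P' s M Hstep _ IH|P P' e s M Hstep _ IH]; intros HM.
  - destruct (den_nil_or_doomed P); tauto.
  - exact (step_den Hstep s (IH HM)).
  - exact (step_den Hstep s (IH HM)).
Qed.

Lemma den_cons_step {P : term Sigma} {e t} :
  den P (e :: t) -> exists P', step P (Some e) P' /\ den P' t.
Proof.
  revert e t.
  induction P as [| |x E Q _|P1 IH1 P2 IH2|P1 IH1 E P2 IH2]; intros e t Ht.
  - discriminate Ht.
  - destruct (den_FAIL Ht).
  - apply den_Pre_cons in Ht as [Hin Ht].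
    exists (subst e x Q); split; [constructor|]; auto.
  - apply den_Ext in Ht as [Ht | Ht].
    + destruct (IH1 _ _ Ht) as (P' & Hstep & HP'); exists P'; split; [apply S4|]; auto.
    + destruct (IH2 _ _ Ht) as (P' & Hstep & HP'); exists P'; split; [apply S5|]; auto.
  - apply den_Par in Ht as (t1 & t2 & Ht1 & Ht2 & Hi).
    assert (V1 : viable P1) by (intro D; exact (doomed_den D Ht1)).
    assert (V2 : viable P2) by (intro D; exact (doomed_den D Ht2)).
    inversion Hi as [|? u1 u2 ? Hin Hu|? u1 ? ? Hout Hu|? ? u2 ? Hout Hu]; subst.
    + destruct (IH1 _ _ Ht1) as (P1' & Hstep1 & HP1').
      destruct (IH2 _ _ Ht2) as (P2' & Hstep2 & HP2').
      exists (Par P1' E P2'); split; [apply S8; auto|].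
      apply den_Par; exists u1, u2; auto.
    + destruct (IH1 _ _ Ht1) as (P1' & Hstep1 & HP1').
      exists (Par P1' E P2); split; [apply S6; auto|].
      apply den_Par; exists u1, t2; auto.
    + destruct (IH2 _ _ Ht2) as (P2' & Hstep2 & HP2').
      exists (Par P1 E P2'); split; [apply S7; auto|].
      apply den_Par; exists t1, u2; auto.
Qed.

Lemma den_wsteps s : forall P : term Sigma,
  den P s -> exists M, wsteps P s M /\ ~ doomed M.
Proof.
  induction s as [|e s IH]; intros P Hs.
  - exists P; split; [constructor | exact (fun D => doomed_den D Hs)].
  - destruct (den_cons_step Hs) as (P' & Hstep & HP').
    destruct (IH P' HP') as (M & Hrun & HM).
    exists M; split; [eapply W_ev; eauto | exact HM].
Qed.

End TraceSemantics.

Theorem theorem1 (Sigma : Type) (HSigma : inhabited Sigma) :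
  forall P : term Sigma, closed P ->
  forall s : list Sigma,
    den P s <-> exists M : term Sigma, wsteps P s M /\ ~ doomed M.
Proof.
  intros P _ s; split.
  - apply den_wsteps; exact HSigma.
  - intros (M & Hrun & HM); exact (wsteps_den _ HSigma Hrun HM).
Qed.
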